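(* Let $\lambda$ be a partition and $\pi$ an $R_\lambda$-permutation. If $\mathcal{D}_\lambda(\pi)$, viewed as a subset of $\mathbb{Z}^{|\lambda|}$, is a convex polytope, then $\pi$ is $R_\lambda$-312-avoiding.
   Context: Fix $n\ge1$; $[m]=\{1,\dots,m\}$. A partition is $\lambda=(\lambda_1\ge\cdots\ge\lambda_n\ge0)\in\mathbb{Z}^n$, $|\lambda|:=\sum_i\lambda_i$, with boxes $(j,i)$ (column $j$, row $i$), $1\le j\le\lambda_1$, $1\le i\le\zeta_j:=\#\{i:\lambda_i\ge j\}$; $R_\lambda:=\{\zeta_j:\zeta_j<n\}$ with elements $q_1<\dots<q_r$, $q_0:=0$, $q_{r+1}:=n$. An $R_\lambda$-permutation is a permutation $\pi$ of $[n]$ (one-line notation) strictly increasing on each index set $\{q_{h-1}+1,\dots,q_h\}$; it is $R_\lambda$-312-containing if there exist $h\in[r-1]$ and $1\le a\le q_h<b\le q_{h+1}<c\le n$ with $\pi_b<\pi_c<\pi_a$, and $R_\lambda$-312-avoiding otherwise. A tableau of shape $\lambda$ fills the boxes with values in $[n]$, strictly increasing down columns and weakly increasing along rows; $\mathcal{T}_\lambda$ is their set, ordered entrywise; a tableau is identified with the point of $\mathbb{Z}^{|\lambda|}$ given by its entries. A set $\mathcal{D}\subseteq\mathbb{Z}^N$ is a convex polytope if it is the set of solutions in $\mathbb{Z}^N$ of a finite system of linear inequalities. The $\lambda$-key $Y_\lambda(\pi)$ is the tableau whose column $j$ consists of $\{\pi_1,\dots,\pi_{\zeta_j}\}$ in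 increasing order. Scanning tableau: the earliest weakly increasing subsequence (EWIS) of $x_1,x_2,\dots$ is $x_{i_1},x_{i_2},\dots$ with $i_1=1$ and $i_u$ the smallest index $>i_{u-1}$ with $x_{i_u}\ge x_{i_{u-1}}$. For $T\in\mathcal{T}_\lambda$ and $l\in[\lambda_1]$, column $l$ of $S(T)$ is computed as follows: consider the boxes of $T$ in columns $l,\dots,\lambda_1$, initially unmarked; for $k=\zeta_l,\dots,1$ in turn, form the sequence of lowest unmarked entries of columns $l,l+1,\dots$ (left to right, over columns still having unmarked boxes), take its EWIS, mark the contributing boxes, and set the entry of $S(T)$ at column $l$, row $k$ to the last term of the EWIS. $\mathcal{D}_\lambda(\pi):=\{T\in\mathcal{T}_\lambda:S(T)\le Y_\lambda(\pi)\}$. *)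

From HB Require Import structures.
From mathcomp Require Import all_boot all_order all_algebra.
Set Implicit Arguments. Unset Strict Implicit. Unset Printing Implicit Defensive.
Import Order.TTheory GRing.Theory Num.Theory.

(* A tableau of shape lam is a seq of columns (seq (seq nat)),
   column j (0-based index j-1) listed top to bottom, with size zeta_j.  A permutation pi of [n]
   is a seq nat in one-line notation (positions 1..n stored at indices 0..n-1). *)

Definition is_partition (n : nat) (lam : seq nat) : bool :=
  (size lam == n) && sorted geq lam.

Definition lam1 (lam : seq nat) : nat := head 0 lam.

Definition zeta (lam : seq nat) (j : nat) : nat := count (fun x => j <= x) lam.

Definition lsize (lam : seq nat) : nat := sumn lam.

Definition Rlam (n : nat) (lam : seq nat) : seq nat :=
  sort leq (undup [seq zeta lam j | j <- iota 1 (lam1 lam) & zeta lam j < n]).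

Definition rR (n : nat) (lam : seq nat) : nat := size (Rlam n lam).

Definition qq (n : nat) (lam : seq nat) (h : nat) : nat :=
  nth 0 (0 :: Rlam n lam ++ [:: n]) h.

Definition pv (pi : seq nat) (a : nat) : nat := nth 0 pi a.-1.

Definition is_perm_n (n : nat) (pi : seq nat) : bool := perm_eq pi (iota 1 n).

Definition is_Rperm (n : nat) (lam : seq nat) (pi : seq nat) : Prop :=
  is_perm_n n pi /\
  forall h, 1 <= h <= (rR n lam).+1 ->
    forall a b, qq n lam h.-1 < a -> a < b -> b <= qq n lam h -> pv pi a < pv pi b.

Definition R312_containing (n : nat) (lam : seq nat) (pi : seq nat) : Prop :=
  exists h a b c,
    (1 <= h <= (rR n lam).-1) /\
    (1 <= a <= qq n lam h) /\ (qq n lam h < b <= qq n lam h.+1) /\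
    (qq n lam h.+1 < c <= n) /\
    (pv pi b < pv pi c < pv pi a).

Definition R312_avoiding (n : nat) (lam : seq nat) (pi : seq nat) : Prop :=
  ~ R312_containing n lam pi.

(* entry of tableau T in column j, row i (both 1-based) *)
Definition entry (T : seq (seq nat)) (j i : nat) : nat := nth 0 (nth [::] T j.-1) i.-1.

Definition is_tableau (n : nat) (lam : seq nat) (T : seq (seq nat)) : Prop :=
  [/\ size T = lam1 lam,
      forall j, 1 <= j <= lam1 lam -> size (nth [::] T j.-1) = zeta lam j,
      forall j i, 1 <= j <= lam1 lam -> 1 <= i <= zeta lam j ->
        1 <= entry T j i <= n,
      forall j i, 1 <= j <= lam1 lam -> 1 <= i -> i < zeta lam j ->
        entry T j i < entry T j i.+1 &
      forall j i, 1 <= j -> j < lam1 lam -> 1 <= i <= zeta lam j.+1 ->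
        entry T j i <= entry T j.+1 i].

Definition tab_le (lam : seq nat) (T U : seq (seq nat)) : Prop :=
  forall j i, 1 <= j <= lam1 lam -> 1 <= i <= zeta lam j -> entry T j i <= entry U j i.

Definition key (lam : seq nat) (pi : seq nat) : seq (seq nat) :=
  [seq sort leq (take (zeta lam j) pi) | j <- iota 1 (lam1 lam)].

(* Unmarked boxes of each column always form a top segment,
   so the state is the list of columns restricted to unmarked boxes; the lowest
   unmarked entry of a column c is its last element. *)

(* Continue the EWIS with current last term cur over the remaining columns,
   marking (removing) contributing boxes; returns new columns and last term. *)
Fixpoint ewis_rest (cur : nat) (cols : seq (seq nat)) : seq (seq nat) * nat :=
  match cols with
  | [::] => ([::], cur)
  | c :: cs =>
      if (c != [::]) && (cur <= last 0 c) then
        let r := ewis_rest (last 0 c) cs in (take (size c).-1 c :: r.1, r.2)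
      else
        let r := ewis_rest cur cs in (c :: r.1, r.2)
  end.

Fixpoint ewis_pass (cols : seq (seq nat)) : seq (seq nat) * nat :=
  match cols with
  | [::] => ([::], 0)
  | c :: cs =>
      if c != [::] then
        let r := ewis_rest (last 0 c) cs in (take (size c).-1 c :: r.1, r.2)
      else
        let r := ewis_pass cs in (c :: r.1, r.2)
  end.

(* m successive passes; returns the last terms in order k = m, m-1, ..., 1 *)
Fixpoint scan_iter (m : nat) (cols : seq (seq nat)) : seq nat :=
  match m with
  | 0 => [::]
  | m'.+1 => let r := ewis_pass cols in r.2 :: scan_iter m' r.1
  end.

(* column l (1-based) of S(T): computed from columns l..lam_1 of T, with
   zeta_l passes, entry of row k being the pass number zeta_l - k + 1 *)
Definition scan_col (lam : seq nat) (T : seq (seq nat)) (l : nat) : seq nat :=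
  rev (scan_iter (zeta lam l) (drop l.-1 T)).

Definition scanning (lam : seq nat) (T : seq (seq nat)) : seq (seq nat) :=
  [seq scan_col lam T l | l <- iota 1 (lam1 lam)].

Definition Dlam (n : nat) (lam : seq nat) (pi : seq nat) (T : seq (seq nat)) : Prop :=
  is_tableau n lam T /\ tab_le lam (scanning lam T) (key lam pi).

Definition tab_point (N : nat) (T : seq (seq nat)) : 'rV[int]_N :=
  \row_(k < N) (Posz (nth 0 (flatten T) k)).

Definition is_convex_polytope (N : nat) (D : 'rV[int]_N -> Prop) : Prop :=
  exists (m : nat) (A : 'M[int]_(m, N)) (b : 'cV[int]_m),
    forall x : 'rV[int]_N,
      D x <-> (forall i : 'I_m, (\sum_(k < N) A i k * x 0 k <= b i 0)%R).

Definition Dlam_points (n : nat) (lam : seq nat) (pi : seq nat) : 'rV[int]_(lsize lam) -> Prop :=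
  fun x => exists T, Dlam n lam pi T /\ x = tab_point (lsize lam) T.

Arguments tab_point N T : clear implicits.
Arguments Dlam_points n lam pi : clear implicits.
Arguments is_convex_polytope N D : clear implicits.

(* Suppose pi_b < pi_c < pi_a with a <= q_h < b <= q_(h+1) < c.  Take the
   column j of height q_(h+1) followed by a column of height q_h, let s be
   pi_1, ..., pi_(q_(h+1)) sorted, and u < pi_c < w the neighbours of pi_c in s.
   Fill the columns up to j as in the key, and the later ones with prefixes of
   the column obtained from s by replacing u, w by a single entry x.  For
   x = u and x = w the columns are nested, so the tableau is its own scanning
   tableau, and it lies below the key because pi_a >= w and pi_b <= u.  The
   tableau is affine in x, so convexity forces the tableau with x = pi_c into
   D_lam(pi); but there the EWIS passes through column j pick up pi_c in the
   row where the key has u < pi_c. *)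

From HB Require Import structures.
From mathcomp Require Import all_boot all_order all_algebra.
From mathcomp Require Import zify.
Set Implicit Arguments. Unset Strict Implicit. Unset Printing Implicit Defensive.
Import Order.TTheory GRing.Theory Num.Theory.

Definition nbelow (g : nat) (s : seq nat) : nat := count (fun y => y < g) s.

Section SortedNat.
Implicit Types (s c : seq nat) (g k x y : nat).

Lemma count_subset_uniq (P : pred nat) s1 s2 :
  uniq s1 -> {subset s1 <= s2} -> count P s1 <= count P s2.
Proof.
move=> s1_uniq s12; rewrite -!size_filter; apply: uniq_leq_size; first exact: filter_uniq.
by move=> y; rewrite !mem_filter => /andP[-> /s12].
Qed.

Lemma count_take_le (P : pred nat) s k : count P (take k s) <= count P s.
Proof. by rewrite -{2}(cat_take_drop k s) count_cat leq_addr. Qed.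

Lemma take_subset {s k k'} : k' <= k -> {subset take k' s <= take k s}.
Proof. by move=> le_k y; rewrite -(take_takel s le_k); apply: mem_take. Qed.

Lemma mem_nth_take s i k : uniq s -> i < size s -> (nth 0 s i \in take k s) = (i < k).
Proof. by move=> s_uniq i_lt; rewrite in_take ?mem_nth // index_uniq. Qed.

Lemma sorted_last_max c y : sorted leq c -> y \in c -> y <= last 0 c.
Proof.
move=> c_sorted yc; have c_gt0 : 0 < size c by case: (c) yc.
rewrite -nth_last -(nth_index 0 yc).
apply: sorted_leq_nth => //; first exact: leq_trans.
- by rewrite inE index_mem.
- by rewrite inE prednK.
- by rewrite -ltnS prednK ?index_mem.
Qed.

Lemma sorted_rcons_l (r : rel nat) c x : sorted r (rcons c x) -> sorted r c.
Proof. by move=> /(take_sorted (size c)); rewrite -cats1 take_size_cat. Qed.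

Lemma mem_take_belast c y : y \in c -> y != last 0 c -> y \in take (size c).-1 c.
Proof.
case/lastP: c => [|c l] //; rewrite size_rcons -cats1 take_size_cat // last_cat /=.
by rewrite mem_cat inE => /orP[-> // | /eqP ->]; rewrite eqxx.
Qed.

Lemma ltn_sorted_leq s : sorted ltn s -> sorted leq s.
Proof. by apply: sub_sorted; apply: ltnW. Qed.

Lemma sorted_ltn_last_notin_belast c : sorted ltn c -> last 0 c \notin take (size c).-1 c.
Proof.
case/lastP: c => [|c x] //; rewrite last_rcons size_rcons -cats1 take_size_cat // cats1.
by rewrite ltn_sorted_uniq_leq rcons_uniq => /andP[/andP[]].
Qed.

Lemma nbelow_all_ge g s : all (leq g) s -> nbelow g s = 0.
Proof.
move=> /allP ge_g; rewrite /nbelow (@eq_in_count _ _ pred0) ?count_pred0 // => y /ge_g /=.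
by rewrite ltnNge => ->.
Qed.

Lemma sorted_all_ge g x s : sorted leq (x :: s) -> g <= x -> all (leq g) s.
Proof.
move=> /(order_path_min leq_trans) /allP x_min g_le_x.
by apply/allP => y /x_min; apply: leq_trans.
Qed.

Lemma sorted_nth_lt_nbelow g s k : sorted leq s -> k < size s ->
  (nth 0 s k < g) = (k < nbelow g s).
Proof.
elim: s k => [|x s IH] k //= s_sorted; have s'_sorted := path_sorted s_sorted.
rewrite /nbelow /= -/(nbelow g s).
case: (ltnP x g) => [x_lt_g | g_le_x].
  by rewrite add1n; case: k => [|k] //= k_lt; rewrite ltnS IH.
have ge_g := sorted_all_ge s_sorted g_le_x; rewrite nbelow_all_ge //.
case: k => [|k] k_lt /=; first by rewrite ltnNge g_le_x.
by apply/negbTE; rewrite -leqNgt; apply: (allP ge_g); apply: mem_nth.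
Qed.

Lemma nbelow_take g s k : sorted leq s ->
  nbelow g (take k s) = minn k (nbelow g s).
Proof.
elim: s k => [|x s IH] [|k] s_sorted //=; rewrite ?minn0 ?min0n //.
rewrite /nbelow /= -!/(nbelow g _) IH ?(path_sorted s_sorted) //.
case: (ltnP x g) => [x_lt_g | g_le_x]; first by rewrite add1n minnSS.
by rewrite nbelow_all_ge ?(sorted_all_ge s_sorted) // minn0.
Qed.

Lemma sorted_nth_le_nbelow X Y i : sorted leq X -> sorted leq Y ->
  (forall g, nbelow g Y <= nbelow g X) -> i < size Y -> nth 0 X i <= nth 0 Y i.
Proof.
move=> X_sorted Y_sorted le_nbelow i_lt.
have : i < nbelow (nth 0 Y i).+1 X.
  by apply: leq_trans (le_nbelow _); rewrite -sorted_nth_lt_nbelow.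
case: (ltnP i (size X)) => [iX | iX _]; last by rewrite nth_default.
by rewrite -sorted_nth_lt_nbelow.
Qed.

End SortedNat.

Section Scanning.
Implicit Types (c : seq nat) (cols : seq (seq nat)) (g x cur : nat).

Lemma sorted_last_eq_max c x : sorted leq c -> x \in c ->
  (forall y, y \in c -> y <= x) -> last 0 c = x.
Proof.
move=> c_sorted xc le_x; apply/eqP; rewrite eqn_leq sorted_last_max // andbT.
by apply: le_x; case: (c) xc => // y c' _; apply: mem_last.
Qed.

Lemma lowest_geq_mem c x : sorted leq c -> (forall y, y \in c -> y <= x) ->
  (c != [::]) && (x <= last 0 c) = (x \in c).
Proof.
move=> c_sorted le_x; apply/idP/idP => [/andP[c_nil x_le] | xc].
  have lc : last 0 c \in c by case: (c) c_nil => // y c' _; apply: mem_last.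
  by have /eqP <- : last 0 c == x by rewrite eqn_leq le_x.
by rewrite sorted_last_max // andbT; case: (c) xc.
Qed.

Lemma ewis_rest_max cols x :
  (forall c, c \in cols -> sorted leq c /\ forall y, y \in c -> y <= x) ->
  ewis_rest x cols = ([seq if x \in c then take (size c).-1 c else c | c <- cols], x).
Proof.
elim: cols => [|c cols IH] //= cols_max.
have [c_sorted le_x] := cols_max c (mem_head _ _).
have {}IH := IH (fun c' c'_in => cols_max c' (@mem_behead _ (c :: cols) c' c'_in)).
rewrite lowest_geq_mem //; case: ifP => xc; last by rewrite IH.
by rewrite (sorted_last_eq_max c_sorted xc le_x) IH.
Qed.

Lemma ewis_rest_ge cols cur : cur <= (ewis_rest cur cols).2.
Proof.
elim: cols cur => [|c cols IH] cur //=.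
by case: ifP => /= [/andP[_ cur_le] | _]; [apply: leq_trans (IH _) | apply: IH].
Qed.

Lemma ewis_rest_ge_last c cols cur : c != [::] -> last 0 c <= (ewis_rest cur (c :: cols)).2.
Proof.
move=> c_nil /=; rewrite c_nil /=; case: ifP => [_ | /negbT]; first exact: ewis_rest_ge.
by rewrite -ltnNge => /ltnW/leq_trans; apply; apply: ewis_rest_ge.
Qed.

(* How a column can change during an EWIS pass whose running term is at
   least [cur] when it reaches that column. *)
Definition pass_step cur c c' : bool :=
  (c' == c) || ((c' == take (size c).-1 c) && (cur <= last 0 c)).

Lemma ewis_rest_step cols cur cur0 : cur0 <= cur ->
  all2 (pass_step cur0) cols (ewis_rest cur cols).1.
Proof.
elim: cols cur => [|c cols IH] cur le_cur //=.
case: ifP => /= [/andP[_ cur_le] | _]; last by rewrite /pass_step eqxx IH.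
by rewrite /pass_step eqxx (leq_trans le_cur cur_le) orbT IH // (leq_trans le_cur).
Qed.

Lemma pass_step_sorted cur c c' : pass_step cur c c' -> sorted leq c -> sorted leq c'.
Proof. by case/orP => [/eqP -> // | /andP[/eqP -> _]]; apply: take_sorted. Qed.

Lemma pass_step_keep cur c c' g : pass_step cur c c' -> g \in c -> g < cur -> g \in c'.
Proof.
case/orP => [/eqP -> // | /andP[/eqP -> cur_le] gc g_lt].
by apply: mem_take_belast => //; apply: contraTneq g_lt => ->; rewrite -leqNgt.
Qed.

Lemma pass_step_all_sorted cur cols cols' : all2 (pass_step cur) cols cols' ->
  {in cols, forall c, sorted leq c} -> {in cols', forall c, sorted leq c}.
Proof.
elim: cols cols' => [|c cols IH] [|c' cols'] //= /andP[step_c steps] sorted_cols c0.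
rewrite inE => /orP[/eqP -> | c0_in].
  by apply: pass_step_sorted step_c _; apply: sorted_cols; apply: mem_head.
by apply: IH c0_in => // c1 c1_in; apply: sorted_cols; rewrite inE c1_in orbT.
Qed.

Lemma ewis_pass_cons c cols : c != [::] -> ewis_pass (c :: cols) =
  (take (size c).-1 c :: (ewis_rest (last 0 c) cols).1, (ewis_rest (last 0 c) cols).2).
Proof. by move=> c_nil /=; rewrite c_nil. Qed.

Lemma scan_iter_S k cols :
  scan_iter k.+1 cols = (ewis_pass cols).2 :: scan_iter k (ewis_pass cols).1.
Proof. by []. Qed.

Lemma size_scan_iter k cols : size (scan_iter k cols) = k.
Proof. by elim: k cols => [|k IH] cols //=; rewrite IH. Qed.

(* Each pass starts at the lowest unmarked entry of c1, which is the largest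
   entry left anywhere, so it just marks that value everywhere. *)
Lemma scan_iter_nested k c1 cols : size c1 = k -> sorted ltn c1 ->
  (forall c, c \in cols -> sorted ltn c /\ {subset c <= c1}) ->
  scan_iter k (c1 :: cols) = rev c1.
Proof.
elim: k c1 cols => [|k IH] c1 cols; first by move/size0nil ->.
case/lastP: c1 => [|c1 x] // size_c1 c1_sorted cols_sub.
have c1_leq := ltn_sorted_leq c1_sorted.
have x_max : forall c y, c \in cols -> y \in c -> y <= x.
  move=> c y /cols_sub[_ c_sub] /c_sub /(sorted_last_max c1_leq); by rewrite last_rcons.
rewrite scan_iter_S ewis_pass_cons /=; last by rewrite -size_eq0 size_rcons.
rewrite last_rcons size_rcons -cats1 take_size_cat //.
rewrite ewis_rest_max /= => [|c c_in]; last first.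
  have [/ltn_sorted_leq c_sorted _] := cols_sub c c_in.
  by split=> // y; apply: x_max.
rewrite cats1 rev_rcons; congr (_ :: _).
apply: IH; [by move: size_c1; rewrite size_rcons => -[] | exact: sorted_rcons_l c1_sorted |].
move=> _ /mapP[c c_in ->]; have [c_sorted c_sub] := cols_sub c c_in.
case: ifP => xc; last first.
  split=> // y yc; move: (c_sub y yc); rewrite mem_rcons inE.
  by case/orP => // /eqP y_eq; move: yc; rewrite y_eq xc.
split; first exact: take_sorted.
move=> y y_in; have yc := mem_take y_in; move: (c_sub y yc); rewrite mem_rcons inE.
case/orP => // /eqP y_eq; move: y_in; rewrite {}y_eq.
rewrite -(sorted_last_eq_max (ltn_sorted_leq c_sorted) xc) => [|z zc]; last exact: x_max c_in zc.
by move/negP: (sorted_ltn_last_notin_belast c_sorted).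
Qed.

(* If the last m entries of the first column exceed g, then the first m passes
   start above g and leave an occurrence of g in the second column unmarked,
   so pass m+1 ends at a value at least g. *)
Lemma scan_iter_lower_bound m k c1 c2 cols g : m < k -> m < size c1 ->
  sorted leq c1 -> sorted leq c2 -> {in cols, forall c, sorted leq c} -> g \in c2 ->
  (forall i, i < m -> g < nth 0 c1 (size c1 - 1 - i)) ->
  g <= nth 0 (scan_iter k (c1 :: c2 :: cols)) m.
Proof.
elim: m k c1 c2 cols => [|m IH] [|k] // c1 c2 cols lt_mk lt_m c1_sorted c2_sorted
  cols_sorted gc2 gt_g; have c1_nil : c1 != [::] by case: (c1) lt_m.
  rewrite scan_iter_S ewis_pass_cons //=; apply: leq_trans (sorted_last_max c2_sorted gc2) _.
  by apply: ewis_rest_ge_last; case: (c2) gc2.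
rewrite scan_iter_S ewis_pass_cons //.
have := ewis_rest_step (c2 :: cols) (leqnn (last 0 c1)).
case: (ewis_rest (last 0 c1) (c2 :: cols)) => [[|c2' cols'] r2] //= /andP[step_c2 steps].
have g_lt_last : g < last 0 c1 by have := gt_g 0 (ltn0Sn _); rewrite subn0 subn1 nth_last.
have size_c1' : size (take (size c1).-1 c1) = (size c1).-1 by rewrite size_takel // leq_pred.
apply: IH => //; rewrite ?size_c1'.
- by move: lt_m; case: (size c1).
- exact: take_sorted.
- exact: pass_step_sorted step_c2 c2_sorted.
- exact: pass_step_all_sorted steps cols_sorted.
- exact: pass_step_keep step_c2 gc2 g_lt_last.
move=> i lt_im; rewrite nth_take; last by lia.
by have := gt_g i.+1 lt_im; congr (_ < nth _ _ _); lia.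
Qed.

End Scanning.

Definition linear_family (F : nat -> seq nat) : Prop :=
  (forall x y, size (F x) = size (F y)) /\
  forall i, (forall x, nth 0 (F x) i = x) \/ (forall x y, nth 0 (F x) i = nth 0 (F y) i).

Lemma linear_family_const (s : seq nat) : linear_family (fun=> s).
Proof. by split=> // i; right. Qed.

Lemma linear_family_param : linear_family (fun x => [:: x]).
Proof. by split=> // [[|i]]; [left | right]. Qed.

Lemma linear_family_cat F G : linear_family F -> linear_family G ->
  linear_family (fun x => F x ++ G x).
Proof.
move=> [sizeF nthF] [sizeG nthG]; split=> [x y | i].
  by rewrite !size_cat (sizeF x y) (sizeG x y).
have nth_catF x : nth 0 (F x ++ G x) i =
    if i < size (F 0) then nth 0 (F x) i else nth 0 (G x) (i - size (F 0)).
  by rewrite nth_cat (sizeF x 0).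
case: (ltnP i (size (F 0))) => iF.
  case: (nthF i) => H; [left => x | right => x y]; by rewrite !nth_catF iF ?H ?(H x y).
case: (nthG (i - size (F 0))) => H; [left => x | right => x y];
  by rewrite !nth_catF ltnNge iF ?H ?(H x y).
Qed.

Lemma linear_family_take k F : linear_family F -> linear_family (fun x => take k (F x)).
Proof.
move=> [sizeF nthF]; split=> [x y | i]; first by rewrite !size_take (sizeF x y).
case: (ltnP i k) => ik; last by right=> x y; rewrite !nth_default // size_take_min; lia.
by case: (nthF i) => H; [left => x | right => x y]; rewrite !nth_take ?H ?(H x y).
Qed.

Lemma linear_family_flatten (I : Type) (G : I -> nat -> seq nat) (js : seq I) :
  (forall j, linear_family (G j)) -> linear_family (fun x => flatten [seq G j x | j <- js]).
Proof.
move=> famG; elim: js => [|j js IH]; first exact: linear_family_const.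
exact: linear_family_cat (famG j) IH.
Qed.

Section LinearConstraints.
Local Open Scope ring_scope.

Lemma linear_family_sum F N (c : 'I_N -> int) : linear_family F ->
  exists a d : int, forall x, \sum_(k < N) c k * (nth 0%N (F x) k)%:Z = a + x%:Z * d.
Proof.
move=> [_ nthF].
exists (\sum_(k < N) c k * (nth 0%N (F 0%N) k)%:Z).
exists (\sum_(k < N) c k * ((nth 0%N (F 1%N) k)%:Z - (nth 0%N (F 0%N) k)%:Z)) => x.
rewrite mulr_sumr -big_split /=; apply: eq_bigr => k _.
case: (nthF k) => H; last by rewrite (H x 0%N) (H 1%N 0%N) subrr !mulr0 addr0.
by rewrite !H /= mulr0 add0r subr0 mulr1 mulrC.
Qed.

Lemma affine_le_between (R : realDomainType) (a d b u g w : R) :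
  a + u * d <= b -> a + w * d <= b -> u <= g <= w -> a + g * d <= b.
Proof.
move=> le_u le_w /andP[ug gw]; case: (lerP 0 d) => d_sign.
  by apply: le_trans le_w; rewrite lerD2l ler_wpM2r.
by apply: le_trans le_u; rewrite lerD2l ler_wnM2r // ltW.
Qed.

Lemma convex_polytope_between N (D : 'rV[int]_N -> Prop) (F : nat -> seq (seq nat)) u g w :
  is_convex_polytope N D -> linear_family (fun x => flatten (F x)) ->
  D (tab_point N (F u)) -> D (tab_point N (F w)) -> (u <= g <= w)%N ->
  D (tab_point N (F g)).
Proof.
move=> [m [A [b Dineq]]] famF Du Dw ugw; apply/Dineq => i.
have [a [d affine]] := linear_family_sum (A i) famF.
have sum_point x : \sum_(k < N) A i k * tab_point N (F x) 0 k = a + x%:Z * d.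
  by rewrite -affine; apply: eq_bigr => k _; rewrite mxE.
have le_b x : D (tab_point N (F x)) -> a + x%:Z * d <= b i 0.
  by move/Dineq/(_ i); rewrite sum_point.
by rewrite sum_point; apply: affine_le_between (le_b _ Du) (le_b _ Dw) _.
Qed.

End LinearConstraints.

Lemma sorted_ltn_consecutive s i z : sorted ltn s -> i.+1 < size s -> z \in s ->
  nth 0 s i <= z < nth 0 s i.+1 -> z = nth 0 s i.
Proof.
move=> s_sorted lt_i zs /andP[le_z lt_z]; apply/eqP; rewrite eqn_leq le_z andbT.
have mono := sorted_leq_nth leq_trans leqnn 0 (ltn_sorted_leq s_sorted).
rewrite -(nth_index 0 zs) in lt_z *; have zi : index z s < size s by rewrite index_mem.
case: (leqP (index z s) i) => [le_zi | lt_iz]; first by apply: mono; rewrite ?inE //; lia.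
by move: lt_z; rewrite ltnNge mono ?inE //; lia.
Qed.

Lemma count_iota_le x L : x <= L -> count (fun j => j <= x) (iota 1 L) = x.
Proof.
move=> le_x; rewrite -(subnKC le_x) iotaD count_cat add1n.
rewrite (@eq_in_count _ _ predT) ?count_predT ?size_iota => [|j]; last first.
  by rewrite mem_iota add1n ltnS => /andP[].
rewrite (@eq_in_count _ _ pred0) ?count_pred0 ?addn0 // => j.
by rewrite mem_iota => /andP[lt_j _]; apply/negbTE; rewrite -ltnNge.
Qed.

Section Shape.
Variable lam : seq nat.
Implicit Types (j : nat).

Lemma zeta_mono j j' : j <= j' -> zeta lam j' <= zeta lam j.
Proof. by move=> le_j; apply: sub_count => x; apply: leq_trans. Qed.

Lemma sumn_zeta L : all (fun x => x <= L) lam ->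
  sumn [seq zeta lam j | j <- iota 1 L] = lsize lam.
Proof.
rewrite /zeta /lsize; elim: lam => [|x l IH] /=; first by elim: (iota 1 L) => //= j s ->.
case/andP=> le_x /IH <-; rewrite -{2}(count_iota_le le_x).
by elim: (iota 1 L) => //= j s ->; lia.
Qed.

Lemma Rlam_zeta n y : y \in Rlam n lam ->
  exists2 j, 1 <= j <= lam1 lam & zeta lam j = y /\ y < n.
Proof.
rewrite mem_sort mem_undup => /mapP[j]; rewrite mem_filter mem_iota => /andP[zn jL] ->.
by exists j => //; lia.
Qed.

Lemma zeta_in_Rlam n j : 1 <= j <= lam1 lam -> zeta lam j < n -> zeta lam j \in Rlam n lam.
Proof.
move=> jL zn; rewrite mem_sort mem_undup; apply/mapP; exists j => //.
by rewrite mem_filter mem_iota zn /=; lia.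
Qed.

Lemma Rlam_sorted n : sorted ltn (Rlam n lam).
Proof.
by rewrite ltn_sorted_uniq_leq sort_uniq undup_uniq; apply: sort_sorted; apply: leq_total.
Qed.

Lemma qq_nth n h : 1 <= h <= rR n lam -> qq n lam h = nth 0 (Rlam n lam) h.-1.
Proof. by case: h => [|h] //= h_lt; rewrite /qq /= nth_cat -/(rR n lam) h_lt. Qed.

Lemma Rlam_consecutive_columns n h : 1 <= h < rR n lam ->
  exists j, [/\ 1 <= j < lam1 lam, zeta lam j = qq n lam h.+1 & zeta lam j.+1 = qq n lam h].
Proof.
move=> h_range.
have -> : qq n lam h = nth 0 (Rlam n lam) h.-1 by apply: qq_nth; lia.
have -> : qq n lam h.+1 = nth 0 (Rlam n lam) h by apply: qq_nth; lia.
set R := Rlam n lam.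
have R_sorted : sorted ltn R := Rlam_sorted n.
have [h_gt0 hR] : 0 < h /\ h < size R by case/andP: h_range.
have hR' : h.-1 < size R := leq_ltn_trans (leq_pred h) hR.
have [jp jpL [zp pn]] := Rlam_zeta (mem_nth 0 hR').
have [jq jqL [zq qn]] := Rlam_zeta (mem_nth 0 hR).
set p := nth 0 R h.-1 in zp pn *; set q := nth 0 R h in zq qn *.
have p_lt_q : p < q by apply: (sorted_ltn_nth ltn_trans 0 R_sorted); rewrite ?inE ?ltn_predL.
pose below_q j := zeta lam j < q.
have has_below : has below_q (iota 1 (lam1 lam)).
  by apply/hasP; exists jp; [rewrite mem_iota add1n ltnS | rewrite /below_q zp].
set j := find below_q (iota 1 (lam1 lam)).
have jL : j < lam1 lam by rewrite -(size_iota 1 (lam1 lam)) -has_find.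
have zj1 : zeta lam j.+1 < q by have := nth_find 0 has_below; rewrite nth_iota // add1n.
have zj_ge k : 0 < k <= j -> q <= zeta lam k.
  case/andP=> k_gt0 k_le; have kj : k.-1 < j by rewrite prednK.
  have := before_find 0 kj; rewrite nth_iota ?(ltn_trans kj jL) // add1n prednK //.
  by rewrite /below_q => /negbT; rewrite -leqNgt.
have jq_le : jq <= j.
  by rewrite leqNgt; apply/negP => /zeta_mono; rewrite zq => /leq_ltn_trans/(_ zj1); rewrite ltnn.
have j_lt_jp : j < jp.
  rewrite ltnNge; apply/negP => jp_le.
  have : q <= p by rewrite -zp zj_ge // jp_le andbT; case/andP: jpL.
  by rewrite leqNgt p_lt_q.
have j_gt0 : 0 < j by apply: leq_trans jq_le; case/andP: jqL.
exists j; split; first by rewrite j_gt0 jL.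
  by apply/eqP; rewrite eqn_leq -{1}zq zeta_mono // zj_ge // j_gt0 /=.
apply: (sorted_ltn_consecutive R_sorted); rewrite ?prednK //.
  by apply: zeta_in_Rlam; [rewrite jL | apply: ltn_trans zj1 qn].
by rewrite -/p -/q -zp zeta_mono // zj1.
Qed.

End Shape.

Lemma nth_columns (col : nat -> seq nat) L j : 1 <= j <= L ->
  nth [::] [seq col j | j <- iota 1 L] j.-1 = col j.
Proof. by move=> jL; rewrite (nth_map 0) ?nth_iota ?size_iota ?add1n ?prednK //; lia. Qed.

Lemma drop_columns (col : nat -> seq nat) L j : 1 <= j <= L ->
  drop j.-1 [seq col j | j <- iota 1 L] = col j :: [seq col j | j <- iota j.+1 (L - j)].
Proof.
move=> jL; rewrite -map_drop drop_iota.
have -> : L - j.-1 = (L - j).+1 by lia.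
by rewrite /= add1n prednK //; case/andP: jL.
Qed.

Lemma partition_le_head lam : sorted geq lam -> all (fun x => x <= lam1 lam) lam.
Proof.
case: lam => [|x l] //= l_sorted; rewrite leqnn /=.
by apply: (order_path_min (fun _ _ _ le1 le2 => leq_trans le2 le1)) l_sorted.
Qed.

Lemma shape_tableau n lam T : is_tableau n lam T ->
  shape T = [seq zeta lam j | j <- iota 1 (lam1 lam)].
Proof.
case=> size_T size_col _ _ _; apply: (eq_from_nth (x0 := 0)); first by rewrite !size_map size_iota.
move=> k; rewrite size_map size_T => kL.
rewrite (nth_map [::]) ?size_T // (nth_map 0) ?size_iota // nth_iota // add1n.
by apply: (size_col k.+1); rewrite ltnS.
Qed.

Lemma tab_point_inj lam T U : sorted geq lam ->
  shape T = [seq zeta lam j | j <- iota 1 (lam1 lam)] -> shape U = shape T ->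
  tab_point (lsize lam) T = tab_point (lsize lam) U -> T = U.
Proof.
move=> lam_sorted shape_T shape_U eq_point.
have size_T : size (flatten T) = lsize lam.
  by rewrite size_flatten shape_T sumn_zeta // partition_le_head.
suff eq_flat : flatten T = flatten U by rewrite -(flattenK T) -(flattenK U) shape_U eq_flat.
apply: (eq_from_nth (x0 := 0)); first by rewrite !size_flatten shape_U.
move=> k; rewrite size_T => kN.
have := congr1 (fun M : 'rV[int]_(lsize lam) => M ord0 (Ordinal kN)) eq_point.
by rewrite !mxE => -[].
Qed.

Section NestedColumns.
Variables (n : nat) (lam : seq nat) (col : nat -> seq nat).
Let K := [seq col j | j <- iota 1 (lam1 lam)].
Hypothesis size_col : forall j, 1 <= j <= lam1 lam -> size (col j) = zeta lam j.
Hypothesis col_sorted : forall j, 1 <= j <= lam1 lam -> sorted ltn (col j).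
Hypothesis col_range : forall j y, 1 <= j <= lam1 lam -> y \in col j -> 1 <= y <= n.
Hypothesis col_nested :
  forall j j', 1 <= j -> j <= j' -> j' <= lam1 lam -> {subset col j' <= col j}.

Lemma nested_columns_tableau : is_tableau n lam K.
Proof.
have col_uniq_leq j : 1 <= j <= lam1 lam -> uniq (col j) /\ sorted leq (col j).
  by move/col_sorted; rewrite ltn_sorted_uniq_leq => /andP[].
split=> [|j jL|j i jL iz|j i jL i_gt0 iz|j i j_gt0 jL iz]; rewrite /entry ?nth_columns //; try lia.
- by rewrite size_map size_iota.
- by rewrite size_col.
- by apply: (col_range jL); apply: mem_nth; rewrite size_col //; lia.
- by apply: (sorted_ltn_nth ltn_trans 0 (col_sorted jL)); rewrite ?inE ?size_col //; lia.
have jL' : 1 <= j <= lam1 lam by lia.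
have j1L : 1 <= j.+1 <= lam1 lam by lia.
have [_ sj] := col_uniq_leq j jL'; have [uj1 sj1] := col_uniq_leq j.+1 j1L.
have le_nbelow g : nbelow g (col j.+1) <= nbelow g (col j).
  by apply: count_subset_uniq uj1 (col_nested _ _ _); lia.
by apply: sorted_nth_le_nbelow sj sj1 le_nbelow _; rewrite size_col //; lia.
Qed.

Lemma scanning_nested_columns : scanning lam K = K.
Proof.
rewrite /scanning /K; apply/eq_in_map => j; rewrite mem_iota add1n ltnS => jL.
rewrite /scan_col drop_columns // (scan_iter_nested (c1 := col j)) ?revK ?size_col //.
  exact: col_sorted.
move=> c /mapP[j' j'_in ->]; rewrite mem_iota in j'_in.
by split; [apply: col_sorted | apply: col_nested]; lia.
Qed.

End NestedColumns.

Lemma sorted_ltn_cat_cons (l h : seq nat) x : sorted ltn l -> sorted ltn h ->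
  all (fun y => y < x) l -> all (fun y => x < y) h -> sorted ltn (l ++ x :: h).
Proof.
move=> l_sorted h_sorted lt_x gt_x.
have x_path : path ltn x h by rewrite path_sortedE ?gt_x //; exact: ltn_trans.
case: l l_sorted lt_x => [|y l] // l_path lt_x.
rewrite /= cat_path -/(sorted ltn (y :: l)) l_path /= x_path andbT.
exact: (allP lt_x) (mem_last _ _).
Qed.

(* The first p - 1 entries of s with s_(t-1) and s_t removed, and x inserted
   where those two were (or at the end).  The position of x does not depend on
   x, and for s_(t-1) <= x <= s_t the column stays strictly increasing. *)
Definition pivot_column (s : seq nat) (t p x : nat) : seq nat :=
  let rest := take p.-1 (take t.-1 s ++ drop t.+1 s) in
  take (minn t.-1 p.-1) rest ++ x :: drop (minn t.-1 p.-1) rest.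

Section PivotColumn.
Variables (s : seq nat) (t p : nat).
Hypothesis s_sorted : sorted ltn s.
Hypothesis t_range : 0 < t < size s.
Hypothesis p_range : 0 < p < size s.
Let u := nth 0 s t.-1.
Let w := nth 0 s t.
Let rest := take t.-1 s ++ drop t.+1 s.

Lemma pivot_split : s = take t.-1 s ++ u :: w :: drop t.+1 s.
Proof.
have [t_gt0 t_lt] : 0 < t /\ t < size s by apply/andP.
rewrite -{1}(cat_take_drop t.-1 s) (drop_nth 0 (leq_ltn_trans (leq_pred t) t_lt)).
by rewrite prednK // (drop_nth 0 t_lt).
Qed.

Lemma size_pivot_rest : size rest = (size s).-2.
Proof. by rewrite size_cat size_takel ?size_drop; lia. Qed.

Lemma nth_pivot_rest i : nth 0 rest i = nth 0 s (if i < t.-1 then i else i.+2).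
Proof.
have t_le : t.-1 <= size s by lia.
rewrite nth_cat size_takel // nth_drop; case: ltnP => i_t; first by rewrite nth_take.
by congr nth; lia.
Qed.

Lemma pivot_rest_subseq : subseq rest s.
Proof.
rewrite {1}pivot_split; apply: cat_subseq (subseq_refl _) _.
exact: subseq_trans (subseq_cons _ w) (subseq_cons _ u).
Qed.

Lemma sorted_pivot_rest : sorted ltn rest.
Proof. by apply: (subseq_sorted _ pivot_rest_subseq s_sorted); apply: ltn_trans. Qed.

Lemma size_pivot_column x : size (pivot_column s t p x) = p.
Proof. by rewrite size_cat /= size_take_min size_drop size_take_min size_pivot_rest; lia. Qed.

Lemma mem_pivot_column x : x \in pivot_column s t p x.
Proof. by rewrite mem_cat mem_head orbT. Qed.

Lemma pivot_column_subset x : x \in s -> {subset pivot_column s t p x <= s}.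
Proof.
move=> xs y; rewrite mem_cat inE => /orP[/mem_take | /orP[/eqP -> // | /mem_drop]] /mem_take;
  exact: (mem_subseq pivot_rest_subseq).
Qed.

Lemma sorted_pivot_column x : u <= x <= w -> sorted ltn (pivot_column s t p x).
Proof.
case/andP=> u_le w_ge; have mono := sorted_ltn_nth ltn_trans 0 s_sorted.
have rest_sorted : sorted ltn (take p.-1 rest) by apply/take_sorted/sorted_pivot_rest.
have size_rest' : size (take p.-1 rest) = p.-1 by rewrite size_takel // size_pivot_rest; lia.
rewrite /pivot_column -/rest.
apply: sorted_ltn_cat_cons; [exact: take_sorted | exact: drop_sorted | |].
  apply/(all_nthP 0) => i; rewrite size_takel ?size_rest' ?geq_minr // => i_lt.
  rewrite !nth_take ?nth_pivot_rest; try lia.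
  rewrite ifT; last by lia.
  by apply: leq_trans u_le; apply: mono; rewrite ?inE; lia.
apply/(all_nthP 0) => i; rewrite size_drop size_rest' => i_lt.
rewrite nth_drop nth_take ?nth_pivot_rest; last by lia.
rewrite ifF; last by lia.
by apply: leq_ltn_trans w_ge _; apply: mono; rewrite ?inE; lia.
Qed.

Lemma nbelow_pivot_column g x :
  nbelow g (pivot_column s t p x) = minn p.-1 (nbelow g rest) + (x < g).
Proof.
rewrite /pivot_column -/rest /nbelow count_cat /= addnCA -count_cat.
by rewrite cat_take_drop -/(nbelow g _) nbelow_take ?ltn_sorted_leq ?sorted_pivot_rest // addnC.
Qed.

Lemma nbelow_pivot_split g : nbelow g s = nbelow g rest + (u < g) + (w < g).
Proof. by rewrite {1}pivot_split /nbelow !count_cat /= !addnA addnAC [_ + (u < g) + _]addnAC. Qed.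

End PivotColumn.

Section Pattern312.
Variables (n : nat) (lam pi : seq nat) (j1 al be ga : nat).
Hypothesis lam_part : is_partition n lam.
Hypothesis pi_perm : is_perm_n n pi.
Hypothesis j1_range : 0 < j1 < lam1 lam.
Let p := zeta lam j1.+1.
Let q := zeta lam j1.
Hypothesis al_in : al \in take p pi.
Hypothesis be_in : be \in take q pi.
Hypothesis be_notin : be \notin take p pi.
Hypothesis ga_in : ga \in pi.
Hypothesis ga_notin : ga \notin take q pi.
Hypothesis be_lt_ga : be < ga.
Hypothesis ga_lt_al : ga < al.

Let size_pi : size pi = n.
Proof. by rewrite (perm_size pi_perm) size_iota. Qed.

Let pi_uniq : uniq pi.
Proof. by rewrite (perm_uniq pi_perm) iota_uniq. Qed.

Let pi_range y : y \in pi -> 0 < y <= n.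
Proof. by rewrite (perm_mem pi_perm) mem_iota add1n ltnS. Qed.

Let zeta_le_n j : zeta lam j <= n.
Proof. by case/andP: lam_part => /eqP <- _; apply: count_size. Qed.

Let p_gt0 : 0 < p.
Proof. by rewrite lt0n; apply: contraTneq al_in => ->; rewrite take0. Qed.

Let p_lt_q : p < q.
Proof. by rewrite ltnNge; apply: contra be_notin => /take_subset; apply. Qed.

Let q_lt_n : q < n.
Proof. by rewrite ltnNge -size_pi; apply: contra ga_notin => /take_oversize ->. Qed.

Let s := sort leq (take q pi).

Let s_sorted : sorted ltn s.
Proof.
by rewrite ltn_sorted_uniq_leq sort_uniq take_uniq //= (sort_sorted leq_total).
Qed.

Let size_s : size s = q.
Proof. by rewrite size_sort size_takel // size_pi ltnW. Qed.

Let mem_s y : (y \in s) = (y \in take q pi).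
Proof. exact: mem_sort. Qed.

Let t := nbelow ga s.

Let nth_s_lt_ga k : k < q -> (nth 0 s k < ga) = (k < t).
Proof. by move=> k_lt; apply: sorted_nth_lt_nbelow; rewrite ?size_s ?ltn_sorted_leq. Qed.

Let t_range : 0 < t < q.
Proof.
have al_s : al \in s by rewrite mem_s; exact: (take_subset (ltnW p_lt_q) al_in).
have be_s : be \in s by rewrite mem_s.
apply/andP; split; first by rewrite -has_count; apply/hasP; exists be.
rewrite -size_s -(count_predC (fun y => y < ga)) -addn1 leq_add2l -has_count.
by apply/hasP; exists al => //=; rewrite -leqNgt ltnW.
Qed.

Let u := nth 0 s t.-1.
Let w := nth 0 s t.

Let t_gt0 : 0 < t.
Proof. by case/andP: t_range. Qed.

Let t_lt_q : t < q.
Proof. by case/andP: t_range. Qed.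

Let u_lt_ga : u < ga.
Proof. by rewrite nth_s_lt_ga ?prednK // ltnW. Qed.

Let ga_notin_s : ga \notin s.
Proof. by rewrite mem_s. Qed.

Let ga_lt_nth_s k : t <= k < q -> ga < nth 0 s k.
Proof.
case/andP=> t_le k_lt; rewrite ltn_neqAle leqNgt nth_s_lt_ga // -leqNgt t_le andbT.
by apply: contraNneq ga_notin_s => ->; rewrite mem_nth ?size_s.
Qed.

Let ga_lt_w : ga < w.
Proof. by apply: ga_lt_nth_s; rewrite leqnn; case/andP: t_range. Qed.

Let s_t_range : 0 < t < size s.
Proof. by rewrite size_s. Qed.

Let s_p_range : 0 < p < size s.
Proof. by rewrite size_s p_gt0. Qed.

Let Z x := pivot_column s t p x.

Let col x j :=
  if j <= j1 then sort leq (take (zeta lam j) pi) else take (zeta lam j) (Z x).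

Let K x := [seq col x j | j <- iota 1 (lam1 lam)].

Let size_col x j : 0 < j <= lam1 lam -> size (col x j) = zeta lam j.
Proof.
move=> jL; rewrite /col; case: leqP => j_j1.
  by rewrite size_sort size_takel ?size_pi ?zeta_le_n.
by rewrite size_takel // size_pivot_column //; apply: zeta_mono.
Qed.

Let col_sorted x j : u <= x <= w -> sorted ltn (col x j).
Proof.
rewrite /col => ux; case: leqP => _; last exact/take_sorted/sorted_pivot_column.
by rewrite ltn_sorted_uniq_leq sort_uniq take_uniq //= (sort_sorted leq_total).
Qed.

Let col_nested x j j' : x \in s -> j <= j' -> {subset col x j' <= col x j}.
Proof.
move=> xs le_j y; rewrite /col; case: (leqP j' j1) => [j'_le | lt_j'].
  by rewrite (leq_trans le_j j'_le) !mem_sort; apply/take_subset/zeta_mono.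
case: leqP => [j_le | lt_j]; last by apply/take_subset/zeta_mono.
move=> /mem_take /(pivot_column_subset s_t_range xs); rewrite mem_s mem_sort.
by apply/take_subset/zeta_mono.
Qed.

Let col_range x j y : x \in s -> y \in col x j -> 0 < y <= n.
Proof.
move=> xs; rewrite /col; case: (leqP j j1) => _; first by rewrite mem_sort => /mem_take /pi_range.
by move=> /mem_take /(pivot_column_subset s_t_range xs); rewrite mem_s => /mem_take /pi_range.
Qed.

Let Dlam_K x : x \in s -> u <= x <= w ->
  (forall g, nbelow g (take p pi) <= nbelow g (Z x)) -> Dlam n lam pi (K x).
Proof.
move=> xs ux Z_le.
have sizes j : 1 <= j <= lam1 lam -> size (col x j) = zeta lam j by apply: size_col.
have sorteds j : 1 <= j <= lam1 lam -> sorted ltn (col x j) by move=> _; apply: col_sorted.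
have nested j j' : 1 <= j -> j <= j' -> j' <= lam1 lam -> {subset col x j' <= col x j}.
  by move=> _ le_j _; apply: col_nested.
split; first by apply: nested_columns_tableau sizes sorteds _ nested => j y _; apply: col_range.
rewrite scanning_nested_columns // => j i jL iz.
rewrite /entry /key !nth_columns // /col; case: (leqP j j1) => // lt_j.
have Zx_sorted := ltn_sorted_leq (sorted_pivot_column s_sorted s_t_range s_p_range ux).
apply: sorted_nth_le_nbelow.
- exact: take_sorted.
- exact: (sort_sorted leq_total).
- move=> g; rewrite /nbelow (permP (permEl (perm_sort leq _))) -/(nbelow g _).
  rewrite nbelow_take // leq_min.
  rewrite (leq_trans (count_size _ _)) ?size_take_min ?geq_minl //=.
  by rewrite -(take_takel pi (zeta_mono lam lt_j)); apply: leq_trans (Z_le g); apply: count_take_le.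
by case/andP: iz => i_gt0; rewrite size_sort size_takel ?size_pi // prednK.
Qed.

Let be_le_u : be <= u.
Proof.
have be_s : be \in s by rewrite mem_s.
have be_t : index be s < t by rewrite -nth_s_lt_ga ?nth_index // -size_s index_mem.
rewrite -(nth_index 0 be_s).
apply: (sorted_leq_nth leq_trans leqnn 0 (ltn_sorted_leq s_sorted)); rewrite ?inE ?size_s.
- exact: ltn_trans be_t t_lt_q.
- exact: leq_ltn_trans (leq_pred t) t_lt_q.
by rewrite -ltnS prednK.
Qed.

Let w_le_al : w <= al.
Proof.
have al_s : al \in s by rewrite mem_s; exact: (take_subset (ltnW p_lt_q) al_in).
have al_q : index al s < q by rewrite -size_s index_mem.
have t_le : t <= index al s by rewrite leqNgt -nth_s_lt_ga // nth_index // -leqNgt ltnW.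
rewrite -(nth_index 0 al_s).
by apply: (sorted_leq_nth leq_trans leqnn 0 (ltn_sorted_leq s_sorted)); rewrite ?inE ?size_s.
Qed.

Let nbelow_take_p_le_Z_w g : nbelow g (take p pi) <= nbelow g (Z w).
Proof.
set A := take p pi.
have A_sub_s y : y \in A -> y \in s by move=> yA; rewrite mem_s (take_subset (ltnW p_lt_q) yA).
have size_A : size A = p by rewrite size_takel // size_pi ltnW // (ltn_trans p_lt_q).
have le_s : (be < g) + nbelow g A <= nbelow g s.
  rewrite -[_ + nbelow g A]/(nbelow g (be :: A)).
  apply: count_subset_uniq; first by rewrite /= be_notin take_uniq.
  by move=> y; rewrite inE => /orP[/eqP -> | /A_sub_s]; rewrite ?mem_s.
have le_p : nbelow g A + (g <= al) <= p.
  rewrite -size_A -(count_predC (fun y => y < g)) leq_add2l.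
  case: (leqP g al) => //= g_le; rewrite -has_count.
  by apply/hasP; exists al => //=; rewrite -leqNgt.
rewrite nbelow_pivot_column //; move: le_s le_p; rewrite (nbelow_pivot_split s_t_range g).
case: (ltnP w g) => [w_lt | g_le] le_s le_p.
  have u_lt : u < g := ltn_trans u_lt_ga (ltn_trans ga_lt_w w_lt).
  move: le_s; rewrite u_lt (leq_ltn_trans be_le_u u_lt) /= add1n !addn1 ltnS => le_s.
  by rewrite -minnSS prednK // leq_min le_s (leq_trans (leq_addr _ _) le_p).
move: le_p; rewrite (leq_trans g_le w_le_al) /= addn1 => le_p.
rewrite addn0 leq_min -ltnS prednK // le_p /=; move: le_s; rewrite /= !addn0.
case: (ltnP u g) => [u_lt | _] /=; last by rewrite addn0 => /(leq_trans (leq_addl _ _)).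
by rewrite (leq_ltn_trans be_le_u u_lt) add1n addn1.
Qed.

Let u_le_w : u <= w.
Proof. exact: ltnW (ltn_trans u_lt_ga ga_lt_w). Qed.

Let ga_between : u <= ga <= w.
Proof. by rewrite (ltnW u_lt_ga) (ltnW ga_lt_w). Qed.

Let Dlam_K_w : Dlam n lam pi (K w).
Proof. by apply: Dlam_K; rewrite ?mem_nth ?size_s ?leqnn ?u_le_w. Qed.

Let Dlam_K_u : Dlam n lam pi (K u).
Proof.
apply: Dlam_K; rewrite ?mem_nth ?size_s ?leqnn ?u_le_w ?(leq_ltn_trans (leq_pred t)) //.
move=> g; apply: leq_trans (nbelow_take_p_le_Z_w g) _.
rewrite !nbelow_pivot_column // leq_add2l.
by case: (ltnP w g) => // w_lt; rewrite (leq_ltn_trans u_le_w w_lt).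
Qed.

Let K_linear : linear_family (fun x => flatten (K x)).
Proof.
apply: linear_family_flatten => j; rewrite /col; case: (j <= j1); first exact: linear_family_const.
apply/linear_family_take/linear_family_cat; first exact: linear_family_const.
exact: linear_family_cat linear_family_param (linear_family_const _).
Qed.

Let K_shape x : shape (K x) = [seq zeta lam j | j <- iota 1 (lam1 lam)].
Proof.
by rewrite /shape -map_comp; apply/eq_in_map => j; rewrite mem_iota add1n ltnS; apply: size_col.
Qed.

(* Column j1 of S(K ga) has an entry >= ga in row t, where the key has u. *)
Let scanning_K_ga_not_le_key : ~ tab_le lam (scanning lam (K ga)) (key lam pi).
Proof.
have j1L : 1 <= j1 <= lam1 lam by case/andP: j1_range => -> /ltnW.
move/(_ j1 t j1L); rewrite t_gt0 ltnW // => /(_ isT).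
rewrite /entry /key /scanning !nth_columns // /scan_col drop_columns // -/s -/u.
have -> : lam1 lam - j1 = (lam1 lam - j1).-1.+1 by rewrite prednK // subn_gt0; case/andP: j1_range.
have col_j1 : col ga j1 = s by rewrite /col leqnn.
have col_j1S : col ga j1.+1 = Z ga by rewrite /col ltnn take_oversize ?size_pivot_column.
rewrite /= col_j1 col_j1S nth_rev size_scan_iter ?prednK //; last exact: ltnW.
set cols := [seq col ga j | j <- _].
have le_nth : ga <= nth 0 (scan_iter q (s :: Z ga :: cols)) (q - t).
  have qt_lt : q - t < q by rewrite ltn_subrL t_gt0 (ltn_trans t_gt0 t_lt_q).
  apply: scan_iter_lower_bound; rewrite ?size_s ?mem_pivot_column //.
  - exact: ltn_sorted_leq s_sorted.
  - exact/ltn_sorted_leq/(sorted_pivot_column s_sorted s_t_range s_p_range ga_between).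
  - by move=> _ /mapP[j _ ->]; exact/ltn_sorted_leq/(col_sorted _ ga_between).
  by move=> i lt_i; apply: ga_lt_nth_s; clear -lt_i t_lt_q; lia.
by move/(leq_trans le_nth); rewrite leqNgt u_lt_ga.
Qed.

Lemma pattern312_not_convex : ~ is_convex_polytope (lsize lam) (Dlam_points n lam pi).
Proof.
move=> convex.
have point_K x : Dlam n lam pi (K x) -> Dlam_points n lam pi (tab_point (lsize lam) (K x)).
  by exists (K x).
have [T [DT eq_point]] : Dlam_points n lam pi (tab_point (lsize lam) (K ga)).
  apply: (convex_polytope_between convex K_linear (point_K _ Dlam_K_u) (point_K _ Dlam_K_w)).
  exact: ga_between.
have shape_T := shape_tableau DT.1.
have lam_sorted : sorted geq lam by case/andP: lam_part.
have T_eq : T = K ga.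
  by apply: (tab_point_inj lam_sorted shape_T _ (esym eq_point)); rewrite K_shape shape_T.
by apply: scanning_K_ga_not_le_key; rewrite -T_eq; case: DT.
Qed.

End Pattern312.

Theorem theorem7p1 (n : nat) (lam pi : seq nat) :
  1 <= n ->
  is_partition n lam ->
  is_Rperm n lam pi ->
  is_convex_polytope (lsize lam) (Dlam_points n lam pi) ->
  R312_avoiding n lam pi.
Proof.
move=> _ lam_part [pi_perm _] convex [h [a [b [c [h_range [a_range [b_range [c_range]]]]]]]].
case/andP=> be_lt_ga ga_lt_al.
have h_lt : 1 <= h < rR n lam by lia.
have [j [j_range zq zp]] := Rlam_consecutive_columns h_lt.
have pi_uniq : uniq pi by rewrite (perm_uniq pi_perm) iota_uniq.
have size_pi : size pi = n by rewrite (perm_size pi_perm) size_iota.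
apply: (pattern312_not_convex lam_part pi_perm j_range _ _ _ _ _ be_lt_ga ga_lt_al convex);
  rewrite ?zq ?zp ?mem_nth_take ?mem_nth ?size_pi //; lia.
Qed.
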